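(* Let $G$ be an NCI-hypergraph. Then no two hyperedges of $G$ intersect.
   Context: A simple hypergraph is a pair $G=(V,E)$, $V$ finite, $E\subseteq 2^V$, assumed minimal (no edge properly contains another); $k$-edges with $k\ge 3$ are called hyperedges. The edge ideal $I(G)$ is the squarefree monomial ideal in $k[V]$ ($k$ a field) generated by $\prod_{v\in e}v$, $e\in E$. A nearly complete intersection is a squarefree monomial ideal $I$ that is not a complete intersection such that for every variable $x$ in the support of $I$, the ideal $I(x=1)$ (substituting $x=1$ in the generators) is a complete intersection. $G$ is an NCI-hypergraph if $I(G)$ is a nearly complete intersection. *)

From mathcomp Require Import all_boot.
Set Implicit Arguments. Unset Strict Implicit. Unset Printing Implicit Defensive.

(* A squarefree monomial ideal in k[V] is recorded by a set of generating
   squarefree monomials, each monomial \prod_{v in e} v being identified with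
   its support e : {set V}.  The empty support is the monomial 1. *)

Definition simple_hypergraph (V : finType) (E : {set {set V}}) : Prop :=
  forall e f, e \in E -> f \in E -> e \subset f -> e = f.

Definition mingens (V : finType) (S : {set {set V}}) : {set {set V}} :=
  [set e in S | [forall f in S, (f \subset e) ==> (f == e)]].

(* generators of I(x=1): substitute x = 1 in each generator *)
Definition subst1 (V : finType) (S : {set {set V}}) (x : V) : {set {set V}} :=
  [set e :\ x | e in S].

Definition supp (V : finType) (S : {set {set V}}) : {set V} :=
  \bigcup_(e in mingens S) e.

(* complete intersection (squarefree monomial ideal): a proper ideal whose
   minimal monomial generators have pairwise disjoint supports, i.e. they form
   a regular sequence.  The unit ideal (1 among generators) is not a CI. *)
Definition is_CI (V : finType) (S : {set {set V}}) : Prop :=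
  set0 \notin S /\
  forall e f, e \in mingens S -> f \in mingens S -> e != f -> [disjoint e & f].

Definition nearly_CI (V : finType) (S : {set {set V}}) : Prop :=
  ~ is_CI S /\ forall x, x \in supp S -> is_CI (subst1 S x).

Definition NCI_hypergraph (V : finType) (E : {set {set V}}) : Prop :=
  simple_hypergraph E /\ nearly_CI E.

Definition hyperedge (V : finType) (E : {set {set V}}) (e : {set V}) : bool :=
  (e \in E) && (3 <= #|e|).

From mathcomp Require Import all_boot.
Set Implicit Arguments. Unset Strict Implicit.

(* Suppose two hyperedges e and f meet in x.  Setting a vertex y to 1 turns
   the edges through y into minimal generators h \ y of a complete
   intersection, so two edges through y cannot share a second vertex; hence
   e and f meet only in x.  Setting a vertex w of f \ x to 1, a minimal
   generator below e comes from an edge g inside w |: (e \ x).  Setting x to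
   1, a minimal generator below g must then be e \ x, so e \ x lies in g:
   thus e and g share two vertices, yet x lies in e and not in g. *)

Section MinimalGenerators.

Variables (V : finType) (S : {set {set V}}).

Lemma mingens_subset m : m \in mingens S -> m \in S.
Proof. by rewrite inE => /andP[]. Qed.

Lemma mingens_below A : A \in S -> exists2 m, m \in mingens S & m \subset A.
Proof.
move=> AS; pose P := [pred m | (m \in S) && (m \subset A)].
have PA : P A by rewrite /= AS subxx.
case: (arg_minnP (fun m : {set V} => #|m|) PA) => m /andP[mS mA] min_m.
exists m => //; rewrite inE mS; apply/forall_inP => h hS; apply/implyP => hm.
by rewrite eqEcard hm min_m //= hS (subset_trans hm mA).
Qed.

Lemma CI_mingens_eq m1 m2 y :
  is_CI S -> m1 \in mingens S -> m2 \in mingens S -> y \in m1 -> y \in m2 ->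
  m1 = m2.
Proof.
move=> [_ CI] m1S m2S ym1 ym2; apply/eqP/negPn/negP => m12.
by have /disjointFr/(_ ym1) := CI _ _ m1S m2S m12; rewrite ym2.
Qed.

Lemma CI_mingens_neq0 m : is_CI S -> m \in mingens S -> exists y, y \in m.
Proof.
move=> [S0 _] /mingens_subset mS; apply/set0Pn.
by apply: contraNneq S0 => <-.
Qed.

End MinimalGenerators.

Section Substitution.

Variables (V : finType) (E : {set {set V}}) (z : V).

Lemma subst1_setD1 g : g \in E -> g :\ z \in subst1 E z.
Proof. exact: imset_f. Qed.

Lemma subst1_id g : g \in E -> z \notin g -> g \in subst1 E z.
Proof.
move=> gE zg; have /setDidPl <- : [disjoint g & [set z]].
  by rewrite disjoint_sym disjoints1.
exact: subst1_setD1.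
Qed.

Lemma mingens_subst1P m :
  m \in mingens (subst1 E z) -> exists2 g, g \in E & m = g :\ z.
Proof. by move/mingens_subset/imsetP. Qed.

Lemma mingens_subst1_setD1 h :
  simple_hypergraph E -> h \in E -> z \in h -> h :\ z \in mingens (subst1 E z).
Proof.
move=> simE hE zh; rewrite inE subst1_setD1 //=.
apply/forall_inP => _ /imsetP[g gE ->]; apply/implyP => gh.
suff /(simE _ _ gE hE)-> : g \subset h by [].
apply/subsetP => y yg; have [-> //|yz] := eqVneq y z.
have /(subsetP gh) : y \in g :\ z by rewrite !inE yz yg.
by rewrite inE => /andP[].
Qed.

End Substitution.

Lemma mingens_simple (V : finType) (E : {set {set V}}) :
  simple_hypergraph E -> mingens E = E.
Proof.
move=> simE; apply/setP => h; rewrite inE andb_idr // => hE.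
by apply/forall_inP => g gE; apply/implyP => gh; rewrite (simE _ _ gE hE gh).
Qed.

Lemma card_ge3_other (T : finType) (A : {set T}) x w :
  3 <= #|A| -> exists2 b, b \in A & (b != x) && (b != w).
Proof.
move=> A3; have /subsetPn[b bA] : ~~ (A \subset [set x; w]).
  apply: contraTN A3 => /subset_leq_card; rewrite cards2 -ltnNge.
  by move/leq_ltn_trans; apply; case: (x != w).
by rewrite !inE negb_or; exists b.
Qed.

Section NCIHypergraph.

Variables (V : finType) (E : {set {set V}}).
Hypothesis NCI_E : NCI_hypergraph E.

Let simE : simple_hypergraph E := NCI_E.1.

Lemma NCI_subst1_CI h y : h \in E -> y \in h -> is_CI (subst1 E y).
Proof.
move=> hE yh; apply: NCI_E.2.2; rewrite /supp mingens_simple //.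
by apply/bigcupP; exists h.
Qed.

Lemma NCI_edges_meet_once h1 h2 x y :
  h1 \in E -> h2 \in E -> x \in h1 -> x \in h2 -> y \in h1 -> y \in h2 ->
  y != x -> h1 = h2.
Proof.
move=> h1E h2E xh1 xh2 yh1 yh2 yx.
have eq12 : h1 :\ x = h2 :\ x.
  apply: (CI_mingens_eq (NCI_subst1_CI h1E xh1) (y := y));
    by [apply: mingens_subst1_setD1 | rewrite !inE yx].
by rewrite -(setD1K xh1) eq12 setD1K.
Qed.

Section TwoEdgesThroughX.

Variables (e f : {set V}) (x w b : V).
Hypotheses (eE : e \in E) (fE : f \in E) (ef : e != f).
Hypotheses (xe : x \in e) (xf : x \in f) (wf : w \in f) (bf : b \in f).
Hypotheses (wx : w != x) (bx : b != x) (bw : b != w).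

Let notin_e y : y \in f -> y != x -> y \notin e.
Proof.
by move=> yf yx; apply/negP => ye; case/eqP: ef; apply: NCI_edges_meet_once yx.
Qed.

Lemma exists_edge_sub_w_e : exists2 g, g \in E & g \subset w |: (e :\ x).
Proof.
have CI_w := NCI_subst1_CI fE wf.
have [m mgen me] := mingens_below (subst1_id eE (notin_e wf wx)).
have [g gE mg] := mingens_subst1P mgen.
have xm : x \notin m.
  apply/negP => xm; have fw := mingens_subst1_setD1 simE fE wf.
  have xfw : x \in f :\ w by rewrite !inE eq_sym wx xf.
  have mf := CI_mingens_eq CI_w mgen fw xm xfw.
  have /(subsetP me) : b \in m by rewrite mf !inE bw bf.
  by rewrite (negbTE (notin_e bf bx)).
exists g => //; apply/subsetP => y yg; rewrite !inE.
have [//|yw] := eqVneq y w; have ym : y \in m by rewrite mg !inE yw.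
by rewrite (subsetP me _ ym) andbT; apply: contraNneq xm => <-.
Qed.

Lemma setD1_sub_of_edge_sub_w_e g :
  g \in E -> g \subset w |: (e :\ x) -> e :\ x \subset g.
Proof.
move=> gE gwe; have xg : x \notin g.
  apply: contraTN gwe => xg; apply/subsetPn; exists x => //.
  by rewrite !inE eqxx orbF eq_sym.
have CI_x := NCI_subst1_CI eE xe.
have [m mgen mg] := mingens_below (subst1_id gE xg).
have [y ym] := CI_mingens_neq0 CI_x mgen.
have /(subsetP gwe) := subsetP mg _ ym; rewrite !inE => /predU1P[yw|/andP[yx ye]].
  have yf : y \in f :\ x by rewrite yw !inE wx wf.
  have mf := CI_mingens_eq CI_x mgen (mingens_subst1_setD1 simE fE xf) ym yf.
  have /(subsetP mg)/(subsetP gwe) : b \in m by rewrite mf !inE bx bf.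
  by rewrite !inE (negbTE bw) (negbTE (notin_e bf bx)) andbF.
have me := CI_mingens_eq CI_x mgen (mingens_subst1_setD1 simE eE xe) ym.
by rewrite -(me _) // !inE yx ye.
Qed.

Lemma edge_through_x_card_le2 : #|e| <= 2.
Proof.
rewrite leqNgt; apply/negP => e3.
have [g gE gwe] := exists_edge_sub_w_e.
have eg := setD1_sub_of_edge_sub_w_e gE gwe.
have [z ze /andP[zx _]] := card_ge3_other x x e3.
have [a ae /andP[ax az]] := card_ge3_other x z e3.
have zg : z \in g by apply: (subsetP eg); rewrite !inE zx ze.
have ag : a \in g by apply: (subsetP eg); rewrite !inE ax ae.
have ge := NCI_edges_meet_once gE eE zg ze ag ae az.
have /(subsetP gwe) : x \in g by rewrite ge.
by rewrite !inE eqxx orbF eq_sym (negbTE wx).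
Qed.

End TwoEdgesThroughX.

End NCIHypergraph.

Theorem lemma3p2 (V : finType) (E : {set {set V}}) :
  NCI_hypergraph E ->
  forall e f : {set V}, hyperedge E e -> hyperedge E f -> e != f ->
  [disjoint e & f].
Proof.
move=> NCI_E e f /andP[eE e3] /andP[fE f3] ef.
rewrite -setI_eq0; apply: contraT => /set0Pn[x /setIP[xe xf]].
have [w wf /andP[wx _]] := card_ge3_other x x f3.
have [b bf /andP[bx bw]] := card_ge3_other x w f3.
have := edge_through_x_card_le2 NCI_E eE fE ef xe xf wf bf wx bx bw.
by rewrite leqNgt e3.
Qed.
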